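(* Assume $\mathrm{char}(\mathbb{F}_q)>3$. Then $\mathfrak{sl}_2(\mathbb{F}_q)$ has a COD, unique up to conjugacy, if and only if $q\equiv 1\pmod 4$.
   Context: $\mathbb{F}_q$ is the finite field with $q$ elements. $\mathfrak{sl}_n(\mathbb{F})$ denotes the Lie algebra of $n\times n$ traceless matrices over $\mathbb{F}$. A Cartan subalgebra is a nilpotent self-normalizing subalgebra. A classical Cartan subalgebra of $\mathfrak{L}=\mathfrak{sl}_n(\mathbb{F})$ (with $\ell=\mathrm{char}\,\mathbb{F}$) is an abelian Cartan subalgebra $H$ such that: (a) $\mathfrak{L}=\bigoplus_\alpha \mathfrak{L}_\alpha$ with $\mathfrak{L}_\alpha=\{x: [x,h]=\alpha(h)x\ \forall h\in H\}$ over linear functionals $\alpha$ on $H$ (roots); (b) for each root $\alpha\ne0$, $[\mathfrak{L}_\alpha,\mathfrak{L}_{-\alpha}]$ is one-dimensional; (c) for roots $\alpha,\beta$ with $\beta\neq0$, not all $\alpha+k\beta$ ($1\le k\le \ell-1$) are roots. The Killing form is $K(A,B)=2n\,\mathrm{Tr}(AB)$. A COD of $\mathfrak{sl}_n(\mathbb{F})$ is a vector space decomposition $\mathfrak{sl}_n(\mathbb{F})=H_0\oplus\cdots\oplus H_n$ into classical Cartan subalgebras that are pairwise orthogonal with respect to $K$. Two CODs are conjugate if there is a Lie algebra automorphism of $\mathfrak{sl}_n(\mathbb{F})$ mapping each component of the first decomposition onto exactly one component of the second. *)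

From HB Require Import structures.
From mathcomp Require Import all_boot all_order all_algebra all_field.
Set Implicit Arguments. Unset Strict Implicit. Unset Printing Implicit Defensive.
Import GRing.Theory.
Local Open Scope ring_scope.

Section COD.
Variables (F : finFieldType) (n : nat).
Local Notation M := 'M[F]_n.

Definition in_sl (x : M) : bool := \tr x == 0.

Definition lie (x y : M) : M := x *m y - y *m x.

Definition killing (x y : M) : F := (2 * n)%:R * \tr (x *m y).

Fixpoint rbr (x : M) (s : seq M) : M :=
  if s is y :: s' then lie x (rbr y s') else x.

Definition lie_subalg (H : {vspace M}) : Prop :=
  (forall x, x \in H -> in_sl x) /\
  (forall x y, x \in H -> y \in H -> lie x y \in H).

(* nilpotent: lower central series H^(k) = [H,H^(k-1)] vanishes *)
Definition lie_nilpotent (H : {vspace M}) : Prop :=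
  exists k, forall x s, size s = k -> x \in H -> all (fun y => y \in H) s ->
    rbr x s = 0.

Definition lie_abelian (H : {vspace M}) : Prop :=
  forall x y, x \in H -> y \in H -> lie x y = 0.

Definition self_normalizing (H : {vspace M}) : Prop :=
  forall x, in_sl x -> (forall h, h \in H -> lie x h \in H) -> x \in H.

Definition cartan (H : {vspace M}) : Prop :=
  lie_subalg H /\ lie_nilpotent H /\ self_normalizing H.

Definition lin_on (H : {vspace M}) (a : M -> F) : Prop :=
  forall c x y, x \in H -> y \in H -> a (c *: x + y) = c * a x + a y.

Definition wspace (H : {vspace M}) (a : M -> F) : {set M} :=
  [set x | in_sl x && [forall h, (h \in H) ==> (lie x h == a h *: x)]].

Definition is_root (H : {vspace M}) (a : M -> F) : Prop :=
  lin_on H a /\ exists2 x, x \in wspace H a & x != 0.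

Definition nonzero_on (H : {vspace M}) (a : M -> F) : Prop :=
  exists2 h, h \in H & a h != 0.

(* classical Cartan subalgebra, l = char F *)
Definition classical_cartan (l : nat) (H : {vspace M}) : Prop :=
  [/\ cartan H, lie_abelian H,
   (forall x, in_sl x -> exists s : seq ({ffun M -> F} * M),
        (forall p, p \in s -> lin_on H p.1 /\ p.2 \in wspace H p.1) /\
        x = \sum_(p <- s) p.2),
   (forall a, is_root H a -> nonzero_on H a ->
      \dim <<[seq lie x y | x <- enum (wspace H a),
                            y <- enum (wspace H (fun h => - a h))]>>%VS = 1%N) &
   (forall a b, is_root H a -> is_root H b -> nonzero_on H b ->
      ~ (forall k : nat, (1 <= k <= l - 1)%N ->
           is_root H (fun h => a h + k%:R * b h)))].

Definition COD (l : nat) (H : 'I_n.+1 -> {vspace M}) : Prop :=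
  [/\ forall x, in_sl x <-> x \in (\sum_i H i)%VS,
      directv (\sum_i H i)%VS,
      forall i, classical_cartan l (H i) &
      forall i j x y, i != j -> x \in H i -> y \in H j -> killing x y = 0].

Definition lie_aut (f : M -> M) : Prop :=
  [/\ forall x, in_sl x -> in_sl (f x),
      forall c x y, in_sl x -> in_sl y -> f (c *: x + y) = c *: f x + f y,
      forall x y, in_sl x -> in_sl y -> f (lie x y) = lie (f x) (f y),
      forall x y, in_sl x -> in_sl y -> f x = f y -> x = y &
      forall y, in_sl y -> exists2 x, in_sl x & f x = y].

Definition COD_conjugate (H H' : 'I_n.+1 -> {vspace M}) : Prop :=
  exists f, lie_aut f /\ exists sigma : 'I_n.+1 -> 'I_n.+1,
    forall i y, y \in H' (sigma i) <-> exists2 x, x \in H i & f x = y.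

End COD.

(** A classical Cartan subalgebra H of sl_2 is abelian, hence proper, and
   self-normalizing, so some root vector outside H has a root that does not vanish at
   some h in H; rescaling h by its half-weight gives a traceless involution g
   (g^2 = 1), and H, lying in the centralizer of g, is the line F g. Conversely F g is
   a classical Cartan subalgebra whose roots take the values 0, 2 and -2 at g; as 2
   and 3 are invertible, no root string has length 4. Traceless x, y with
   tr(xy) = 0 anticommute, so a COD is a triple of mutually anticommuting traceless
   involutions; then g0 g1 = c g2 with c^2 = -1, and conversely such a Pauli triple is
   built from diag(1, -1) and the swap matrix once -1 is a square. After replacing g2
   by -g2 if necessary, two Pauli triples share c, hence the structure constants of
   the bracket in their bases, so the linear map matching them is an automorphism
   carrying one COD onto the other. Finally -1 is a square in F_q iff 4 divides
   q - 1, the order of the cyclic group F_q^*. *)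

From mathcomp Require Import all_boot all_order all_algebra all_field.
From mathcomp Require Import cyclic ring zify.
Set Implicit Arguments. Unset Strict Implicit. Unset Printing Implicit Defensive.
Import GRing.Theory.
Local Open Scope ring_scope.

Lemma natr_neq0_lt_pchar (R : idomainType) (p k : nat) :
  p \in [pchar R] -> (0 < k < p)%N -> k%:R != 0 :> R.
Proof.
move=> pcharRp /andP[k_gt0 k_lt_p]; rewrite -(dvdn_pcharf pcharRp).
by apply: contraTN k_lt_p => /(dvdn_leq k_gt0); rewrite leqNgt.
Qed.

Lemma sqrN1_neq0 (R : nzRingType) (c : R) : c ^+ 2 = -1 -> c != 0.
Proof.
move=> c_sqr; apply/eqP => c0; move: c_sqr; rewrite c0 expr0n /= => /eqP.
by rewrite eq_sym oppr_eq0 oner_eq0.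
Qed.

Lemma dim_subv_vline (K : fieldType) (vT : vectType K) (U : {vspace vT}) (v w : vT) :
  (U <= <[v]>)%VS -> w \in U -> w != 0 -> \dim U = 1%N.
Proof.
move=> sUv wU w_neq0; apply/eqP; rewrite eqn_leq; apply/andP; split.
  by apply: leq_trans (dimvS sUv) _; rewrite dim_vline leq_b1.
by rewrite lt0n dimv_eq0; apply: contraNneq w_neq0 => U0; rewrite -memv0 -U0.
Qed.

Lemma vline_opp (K : fieldType) (vT : vectType K) (v : vT) : <[- v]>%VS = <[v]>%VS.
Proof. by apply/eqP; rewrite eqEsubv -!memvE memvN memv_line -memvN memv_line. Qed.

Lemma big_ord2 (R : Type) (idx : R) (op : Monoid.law idx) (f : 'I_2 -> R) :
  \big[op/idx]_i f i = op (f 0) (f 1).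
Proof. by rewrite !big_ord_recl big_ord0 Monoid.mulm1; congr (op _ (f _)); apply: val_inj. Qed.

Lemma big_ord3 (R : Type) (idx : R) (op : Monoid.law idx) (f : 'I_3 -> R) :
  \big[op/idx]_i f i = op (f 0) (op (f 1) (f 2)).
Proof.
by rewrite !big_ord_recl big_ord0 Monoid.mulm1; congr (op _ (op (f _) (f _))); apply: val_inj.
Qed.

Lemma ord2P (i : 'I_2) : i = 0 \/ i = 1.
Proof. by case: i => [[|[|//]] Hi]; [left|right]; apply: val_inj. Qed.

Lemma ord3P (i : 'I_3) : [\/ i = 0, i = 1 | i = 2].
Proof. by case: i => [[|[|[|//]]] Hi]; [apply: Or31|apply: Or32|apply: Or33]; apply: val_inj. Qed.

Section SL2.
Variable F : finFieldType.
Local Notation M := 'M[F]_2.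

Lemma mxtrace2 (x : M) : \tr x = x 0 0 + x 1 1.
Proof. exact: big_ord2. Qed.

Lemma in_slD (x y : M) : in_sl x -> in_sl y -> in_sl (x + y).
Proof. by rewrite /in_sl mxtraceD => /eqP -> /eqP ->; rewrite addr0. Qed.

Lemma in_slZ k (x : M) : in_sl x -> in_sl (k *: x).
Proof. by rewrite /in_sl mxtraceZ => /eqP ->; rewrite mulr0. Qed.

Lemma in_slN (x : M) : in_sl x -> in_sl (- x).
Proof. by rewrite -scaleN1r; apply: in_slZ. Qed.

Lemma lieZl k (x y : M) : lie (k *: x) y = k *: lie x y.
Proof. by rewrite /lie -scalemxAr -scalemxAl scalerBr. Qed.

Lemma lieZr k (x y : M) : lie x (k *: y) = k *: lie x y.
Proof. by rewrite /lie -scalemxAr -scalemxAl scalerBr. Qed.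

Lemma in_sl_delta (i j : 'I_2) : i != j -> in_sl (delta_mx i j : M).
Proof.
rewrite /in_sl mxtrace2 !mxE.
by have [->|->] := ord2P i; have [->|->] := ord2P j; rewrite //= addr0.
Qed.

Lemma sl2_anticomm (x y : M) : in_sl x -> in_sl y ->
  x *m y + y *m x = \tr (x *m y) *: 1%:M.
Proof.
rewrite /in_sl !mxtrace2 !addr_eq0 => /eqP x11 /eqP y11.
apply/matrixP => i j; rewrite !mxE !big_ord2 /=.
by have [->|->] := ord2P i; have [->|->] := ord2P j; rewrite /= ?x11 ?y11; ring.
Qed.

Lemma sl2_anticomm_orth (x y : M) : in_sl x -> in_sl y -> \tr (x *m y) = 0 ->
  y *m x = - (x *m y).
Proof.
move=> xsl ysl xy0; apply/eqP.
by rewrite -addr_eq0 addrC sl2_anticomm // xy0 scale0r.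
Qed.

Hypothesis two_neq0 : 2%:R != 0 :> F.

Lemma four_neq0 : 4%:R != 0 :> F.
Proof. by rewrite (natrM _ 2 2) mulf_neq0. Qed.

Lemma sl2_nondeg (x : M) : in_sl x -> x != 0 -> exists2 z, in_sl z & \tr (x *m z) != 0.
Proof.
rewrite /in_sl mxtrace2 addrC addr_eq0 => /eqP x11 x_neq0.
have tr_delta i j : \tr (x *m delta_mx i j) = x j i.
  rewrite mxtrace2 !mxE !big_ord2 !mxE.
  by have [->|->] := ord2P i; have [->|->] := ord2P j; rewrite /=; ring.
have [x10|x10] := eqVneq (x 1 0) 0; last first.
  by exists (delta_mx 0 1); [exact: in_sl_delta | rewrite tr_delta].
have [x01|x01] := eqVneq (x 0 1) 0; last first.
  by exists (delta_mx 1 0); [exact: in_sl_delta | rewrite tr_delta].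
exists (delta_mx 0 0 - delta_mx 1 1).
  by rewrite /in_sl mxtrace2 !mxE /=; apply/eqP; ring.
rewrite mulmxBr raddfB /= !tr_delta x11 opprK -mulr2n -mulr_natl mulf_neq0 //.
apply: contra x_neq0 => /eqP x00; apply/eqP/matrixP => i j; rewrite mxE.
by have [->|->] := ord2P i; have [->|->] := ord2P j; rewrite ?x11 ?x00 ?x01 ?x10 ?oppr0.
Qed.

Lemma sl2_sqr (x : M) : in_sl x -> x *m x = (\tr (x *m x) / 2%:R) *: 1%:M.
Proof.
move=> xsl; apply: (scalerI two_neq0).
by rewrite scalerA mulrC divfK // scaler_nat mulr2n sl2_anticomm.
Qed.

Lemma ad_eigen_mul (h y : M) d mu : h *m h = d *: 1%:M -> lie y h = mu *: y -> mu != 0 ->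
  y *m h = (mu / 2%:R) *: y /\ h *m y = - ((mu / 2%:R) *: y).
Proof.
move=> hh yh mu_neq0.
have hy : h *m y = - (y *m h).
  have : mu *: (y *m h + h *m y) = 0.
    rewrite scalerDr scalemxAl -yh scalemxAr -yh /lie mulmxBl mulmxBr -!mulmxA hh.
    by rewrite !mulmxA hh -scalemxAl -scalemxAr mulmx1 mul1mx subrKA subrr.
  by move/eqP; rewrite scaler_eq0 (negbTE mu_neq0) addrC addr_eq0 => /eqP.
have yh2 : y *m h = (mu / 2%:R) *: y.
  apply: (scalerI two_neq0).
  by rewrite scalerA mulrC divfK // -yh /lie hy opprK scaler_nat mulr2n.
by rewrite hy yh2.
Qed.

Lemma sqr_ad_eigen (h y : M) mu : in_sl h -> lie y h = mu *: y -> y != 0 -> mu != 0 ->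
  h *m h = (mu / 2%:R) ^+ 2 *: 1%:M.
Proof.
move=> hsl yh y_neq0 mu_neq0; have hh := sl2_sqr hsl.
have [yh2 _] := ad_eigen_mul hh yh mu_neq0.
have : (\tr (h *m h) / 2%:R - (mu / 2%:R) ^+ 2) *: y = 0.
  rewrite scalerBl -{1}[y]mulmx1 scalemxAr -hh mulmxA yh2 -scalemxAl yh2.
  by rewrite scalerA -expr2 subrr.
move/eqP; rewrite scaler_eq0 (negbTE y_neq0) orbF subr_eq0 => /eqP <-.
exact: hh.
Qed.

Lemma lie_abelian_vline (v : M) : lie_abelian <[v]>%VS.
Proof.
by move=> _ _ /vlineP[k ->] /vlineP[k' ->]; rewrite lieZl lieZr /lie subrr !scaler0.
Qed.

Lemma lin_on_vlineZ (v : M) (a : M -> F) k : lin_on <[v]>%VS a -> a (k *: v) = k * a v.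
Proof.
move=> lin_a; have a0 : a 0 = 0.
  by apply: (addrI (a 0)); rewrite addr0 -{1}[a 0]mul1r -lin_a ?mem0v // scaler0 addr0.
by rewrite -[k *: v]addr0 lin_a ?memv_line ?mem0v // a0 addr0.
Qed.

Lemma wspaceP (H : {vspace M}) (a : M -> F) y :
  reflect (in_sl y /\ forall h, h \in H -> lie y h = a h *: y) (y \in wspace H a).
Proof.
rewrite inE; apply: (iffP andP) => -[ysl yH]; split=> //.
  by move=> h hH; move/forallP/(_ h): yH; rewrite hH => /eqP.
by apply/forallP => h; apply/implyP => /yH ->.
Qed.

Lemma wspace_vlineP (v y : M) (a : M -> F) : lin_on <[v]>%VS a ->
  reflect (in_sl y /\ lie y v = a v *: y) (y \in wspace <[v]>%VS a).
Proof.
move=> lin_a; apply: (iffP (wspaceP _ _ _)) => -[ysl yv]; split=> //.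
  exact/yv/memv_line.
by move=> _ /vlineP[k ->]; rewrite lieZr yv lin_on_vlineZ // scalerA.
Qed.

Lemma nonzero_on_vline (v : M) (a : M -> F) : lin_on <[v]>%VS a -> nonzero_on <[v]>%VS a ->
  a v != 0.
Proof. by move=> lin_a [_ /vlineP[k ->]]; rewrite lin_on_vlineZ // mulf_eq0 negb_or => /andP[]. Qed.

Section Involution.
Variable g : M.
Hypotheses (g_sl : in_sl g) (g_sqr : g *m g = 1%:M).

Lemma involution_neq0 : g != 0.
Proof.
apply/eqP => g0; move: g_sqr; rewrite g0 mul0mx => /matrixP/(_ 0 0).
by rewrite !mxE eqxx /= => /eqP; rewrite eq_sym oner_eq0.
Qed.

Lemma mxtrace_involution : \tr (g *m g) = 2%:R.
Proof. by rewrite g_sqr mxtrace1. Qed.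

Lemma centralizer_involution (x : M) : in_sl x -> x *m g = g *m x ->
  x = (\tr (x *m g) / 2%:R) *: g.
Proof.
move=> xsl xg; apply: (scalerI two_neq0); rewrite scalerA mulrC divfK //.
rewrite -{2}[g]mul1mx scalemxAl -(sl2_anticomm xsl g_sl) -xg mulmxDl.
by rewrite -mulmxA g_sqr mulmx1 scaler_nat mulr2n.
Qed.

Lemma self_normalizing_involution : self_normalizing <[g]>%VS.
Proof.
move=> x xsl /(_ g (memv_line g)) /vlineP[t xg].
have : \tr (lie x g *m g) = 0.
  by rewrite /lie mulmxBl -mulmxA g_sqr mulmx1 raddfB /= mxtrace_mulC mulmxA g_sqr mul1mx subrr.
rewrite xg -scalemxAl mxtraceZ mxtrace_involution => /eqP.
rewrite mulf_eq0 (negbTE two_neq0) orbF => /eqP t0.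
move/eqP: xg; rewrite t0 scale0r subr_eq0 => /eqP /(centralizer_involution xsl) ->.
exact/memvZ/memv_line.
Qed.

(* For e = 1 or -1 this is, up to the factor 4, the projection onto the root space of
   weight 2e. *)
Definition eigen_proj (e : F) (z : M) : M := (1%:M - e *: g) *m z *m (1%:M + e *: g).

Section EigenProj.
Variable e : F.
Hypothesis e_sqr : e ^+ 2 = 1.

Lemma involution_mulg_l : (1%:M + e *: g) *m g = e *: (1%:M + e *: g).
Proof. by rewrite mulmxDl mul1mx -scalemxAl g_sqr scalerDr scalerA -expr2 e_sqr scale1r addrC. Qed.

Lemma involution_mulg_r : g *m (1%:M - e *: g) = - (e *: (1%:M - e *: g)).
Proof.
rewrite mulmxBr mulmx1 -scalemxAr g_sqr scalerBr scalerA -expr2 e_sqr scale1r.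
by rewrite opprB.
Qed.

Lemma involution_mulg_lr : (1%:M + e *: g) *m (1%:M - e *: g) = 0.
Proof.
by rewrite mulmxBr mulmx1 -scalemxAr involution_mulg_l scalerA -expr2 e_sqr scale1r subrr.
Qed.

Lemma eigen_proj_mulg z : eigen_proj e z *m g = e *: eigen_proj e z.
Proof. by rewrite /eigen_proj -!mulmxA involution_mulg_l -!scalemxAr. Qed.

Lemma mulg_eigen_proj z : g *m eigen_proj e z = - (e *: eigen_proj e z).
Proof. by rewrite /eigen_proj !mulmxA involution_mulg_r !mulNmx -!scalemxAl. Qed.

Lemma eigen_proj_sl z : in_sl (eigen_proj e z).
Proof.
by rewrite /in_sl /eigen_proj mxtrace_mulC mulmxA involution_mulg_lr mul0mx mxtrace0.
Qed.

Lemma lie_eigen_proj z : lie (eigen_proj e z) g = (2%:R * e) *: eigen_proj e z.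
Proof.
by rewrite /lie eigen_proj_mulg mulg_eigen_proj opprK -scalerA scaler_nat mulr2n.
Qed.

Lemma mxtrace_eigen_proj x z : x *m g = - (e *: x) -> g *m x = e *: x ->
  \tr (x *m eigen_proj e z) = 4%:R * \tr (x *m z).
Proof.
move=> xg gx.
have x_r : x *m (1%:M - e *: g) = 2%:R *: x.
  by rewrite mulmxBr mulmx1 -scalemxAr xg scalerN opprK scalerA -expr2 e_sqr scale1r scaler_nat.
have x_l : (1%:M + e *: g) *m x = 2%:R *: x.
  by rewrite mulmxDl mul1mx -scalemxAl gx scalerA -expr2 e_sqr scale1r scaler_nat.
rewrite /eigen_proj !mulmxA mxtrace_mulC !mulmxA x_l -scalemxAl x_r.
by rewrite -!scalemxAl scalerA mxtraceZ -natrM.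
Qed.

End EigenProj.

Lemma sl2_involution_decomp x : in_sl x ->
  x = (\tr (x *m g) / 2%:R) *: g + 4%:R^-1 *: (eigen_proj 1 x + eigen_proj (-1) x).
Proof.
move=> xsl; have gx : g *m x = \tr (x *m g) *: 1%:M - x *m g.
  by rewrite -(sl2_anticomm xsl g_sl) addrC addKr.
have gxg : g *m x *m g = \tr (x *m g) *: g - x.
  by rewrite gx mulmxBl -scalemxAl mul1mx -mulmxA g_sqr mulmx1.
rewrite /eigen_proj scaleN1r opprK !scale1r !mulmxBl !mulmxDl !mul1mx !mulmxDr !mulmxN.
rewrite !mulmx1 gxg; move: (x *m g) (g *m x) => u v.
apply/matrixP => i j; rewrite !mxE; field.
by rewrite four_neq0 two_neq0.
Qed.

Definition trace_weight (e : F) : {ffun M -> F} := [ffun h => e * \tr (h *m g)].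

Lemma lin_on_trace_weight e : lin_on <[g]>%VS (trace_weight e).
Proof.
move=> k x y _ _; rewrite !ffunE mulmxDl -scalemxAl mxtraceD mxtraceZ.
by rewrite mulrDr mulrCA.
Qed.

Lemma mem_wspace_trace_weight e y : in_sl y -> lie y g = (2%:R * e) *: y ->
  y \in wspace <[g]>%VS (trace_weight e).
Proof.
move=> ysl yg; apply/wspace_vlineP; first exact: lin_on_trace_weight.
by rewrite ffunE mxtrace_involution mulrC.
Qed.

Lemma weight_decomposition_involution x : in_sl x ->
  exists s : seq ({ffun M -> F} * M),
    (forall q, q \in s -> lin_on <[g]>%VS q.1 /\ q.2 \in wspace <[g]>%VS q.1) /\
    x = \sum_(q <- s) q.2.
Proof.
move=> xsl; pose c := 4%:R^-1 : F; have sqrN1 : (-1) ^+ 2 = 1 :> F by rewrite sqrrN expr1n.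
exists [:: (trace_weight 0, (\tr (x *m g) / 2%:R) *: g);
           (trace_weight 1, c *: eigen_proj 1 x); (trace_weight (-1), c *: eigen_proj (-1) x)].
split; last by rewrite !big_cons big_nil addr0 -scalerDr -sl2_involution_decomp.
move=> q; rewrite !in_cons in_nil orbF => /or3P[] /eqP -> /=; split; try exact: lin_on_trace_weight.
- apply: mem_wspace_trace_weight; first exact/in_slZ.
  by rewrite mulr0 scale0r; apply: lie_abelian_vline; [exact/memvZ/memv_line | exact: memv_line].
- apply: mem_wspace_trace_weight; first exact/in_slZ/eigen_proj_sl/expr1n.
  by rewrite lieZl lie_eigen_proj ?expr1n // !scalerA mulrC.
- apply: mem_wspace_trace_weight; first exact/in_slZ/eigen_proj_sl/sqrN1.
  by rewrite lieZl lie_eigen_proj // !scalerA mulrC.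
Qed.

Lemma ad_eigen_involution y mu : lie y g = mu *: y -> mu != 0 ->
  y *m g = (mu / 2%:R) *: y /\ g *m y = - ((mu / 2%:R) *: y).
Proof. by apply: (ad_eigen_mul (d := 1)); rewrite scale1r. Qed.

Lemma root_involution (a : M -> F) : is_root <[g]>%VS a ->
  a g / 2%:R = 0 \/ (a g / 2%:R) ^+ 2 = 1.
Proof.
case=> lin_a [y /(wspace_vlineP _ lin_a) [_ yg] y_neq0].
have [->|ag_neq0] := eqVneq (a g) 0; [left; exact: mul0r | right].
have [yg2 _] := ad_eigen_involution yg ag_neq0.
have : ((a g / 2%:R) ^+ 2 - 1) *: y = 0.
  by rewrite scalerBl scale1r expr2 -scalerA -yg2 scalemxAl -yg2 -mulmxA g_sqr mulmx1 subrr.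
by move/eqP; rewrite scaler_eq0 (negbTE y_neq0) orbF subr_eq0 => /eqP.
Qed.

Lemma root_involution_sqr (a : M -> F) : is_root <[g]>%VS a -> a g != 0 ->
  (a g / 2%:R) ^+ 2 = 1.
Proof.
move=> root_a ag_neq0; case: (root_involution root_a) => // /eqP.
by rewrite mulf_eq0 invr_eq0 (negbTE ag_neq0) (negbTE two_neq0).
Qed.

Lemma lie_opp_eigen x y e : x *m g = e *: x -> y *m g = - (e *: y) -> in_sl x -> in_sl y ->
  lie x y = (- e * \tr (x *m y)) *: g.
Proof.
move=> xg yg xsl ysl.
have -> : lie x y = lie x y *m g *m g by rewrite -mulmxA g_sqr mulmx1.
rewrite /lie mulmxBl -!mulmxA xg yg mulmxN -!scalemxAr -opprD -scalerDr.
by rewrite (sl2_anticomm xsl ysl) scalerA mulNmx -scalemxAl mul1mx mulNr scaleNr.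
Qed.

Lemma dim_root_bracket_involution (a : M -> F) : is_root <[g]>%VS a -> nonzero_on <[g]>%VS a ->
  \dim <<[seq lie x y | x <- enum (wspace <[g]>%VS a),
                        y <- enum (wspace <[g]>%VS (fun h => - a h))]>>%VS = 1%N.
Proof.
move=> root_a nz_a; have [lin_a [x0 /(wspace_vlineP _ lin_a) [x0sl x0g] x0_neq0]] := root_a.
have ag_neq0 := nonzero_on_vline lin_a nz_a.
have lin_na : lin_on <[g]>%VS (fun h => - a h).
  by move=> k x y xg yg; rewrite lin_a // opprD mulrN.
set e := a g / 2%:R; have e_sqr : (- e) ^+ 2 = 1 by rewrite sqrrN root_involution_sqr.
have e_neq0 : e != 0 by rewrite mulf_neq0 ?invr_eq0.
have mem_opp y : y \in wspace <[g]>%VS (fun h => - a h) -> in_sl y /\ y *m g = - (e *: y).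
  case/(wspace_vlineP _ lin_na) => ysl yg; split=> //.
  have nag_neq0 : - a g != 0 by rewrite oppr_eq0.
  by have [-> _] := ad_eigen_involution yg nag_neq0; rewrite mulNr scaleNr.
have [x0g2 gx0] := ad_eigen_involution x0g ag_neq0.
have [z zsl x0z] := sl2_nondeg x0sl x0_neq0.
have y0a : eigen_proj (- e) z \in wspace <[g]>%VS (fun h => - a h).
  apply/(wspace_vlineP _ lin_na); split; first exact: eigen_proj_sl.
  by rewrite lie_eigen_proj // mulrN /e mulrC divfK.
(* All brackets lie on the line through g, and pairing x0 with a z of nonzero trace
   product gives a nonzero one. *)
apply: (@dim_subv_vline _ _ _ g (lie x0 (eigen_proj (- e) z))).
- apply/span_subvP => _ /allpairsP[[x y] [/= xa ya ->]].
  rewrite mem_enum in xa; rewrite mem_enum in ya.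
  have [xsl /ad_eigen_involution /(_ ag_neq0) [xg _]] := wspace_vlineP _ lin_a xa.
  have [ysl yg] := mem_opp y ya.
  by rewrite (lie_opp_eigen xg yg xsl ysl) memvZ ?memv_line.
- by apply: memv_span; apply: allpairs_f; rewrite mem_enum //; apply/(wspace_vlineP _ lin_a).
have y0g : eigen_proj (- e) z *m g = - (e *: eigen_proj (- e) z).
  by rewrite eigen_proj_mulg // scaleNr.
have x0g' : x0 *m g = - (- e *: x0) by rewrite scaleNr opprK.
have gx0' : g *m x0 = - e *: x0 by rewrite scaleNr.
rewrite (lie_opp_eigen x0g2 y0g x0sl (eigen_proj_sl _ _)) // mxtrace_eigen_proj //.
by rewrite scaler_eq0 negb_or involution_neq0 !mulf_neq0 ?oppr_eq0 ?four_neq0.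
Qed.

Hypothesis three_neq0 : 3%:R != 0 :> F.

(* With e := b g / 2 (so e ^+ 2 = 1), the half-weight a g / 2 is 0, e or -e; hence
   some a + k b with 1 <= k <= 3 has half-weight 2e, which is neither 0 nor a square
   root of 1 because 2 and 3 are nonzero. *)
Lemma no_root_string_involution (a b : M -> F) :
  is_root <[g]>%VS a -> is_root <[g]>%VS b -> nonzero_on <[g]>%VS b ->
  ~ (forall k : nat, (1 <= k <= 3)%N -> is_root <[g]>%VS (fun h => a h + k%:R * b h)).
Proof.
move=> root_a root_b nz_b string; have [lin_b _] := root_b.
have bg_neq0 := nonzero_on_vline lin_b nz_b.
set u := a g / 2%:R; set e := b g / 2%:R.
have e_sqr : e ^+ 2 = 1 by apply: root_involution_sqr.
have half k : (a g + k%:R * b g) / 2%:R = u + k%:R * e by rewrite mulrDl mulrA.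
have [k k_range uk] : exists2 k, (1 <= k <= 3)%N & u + k%:R * e = 2%:R * e.
  have [u0|u_sqr] : u = 0 \/ u ^+ 2 = 1 := root_involution root_a.
    by exists 2%N; rewrite // u0 add0r.
  have : (u - e) * (u + e) == 0 by rewrite -subr_sqr u_sqr e_sqr subrr.
  rewrite mulf_eq0 subr_eq0 addr_eq0 => /orP[] /eqP ->.
    by exists 1%N => //; ring.
  by exists 3%N => //; ring.
have := root_involution (string k k_range); rewrite /= half uk.
case=> [/eqP|].
  by rewrite mulf_eq0 (negbTE two_neq0) orFb; apply/negP; rewrite -sqrf_eq0 e_sqr oner_eq0.
rewrite exprMn e_sqr mulr1 -natrX => /eqP; rewrite -subr_eq0 -(natrB _ (_ : 1 <= 2 ^ 2)%N) //.
by rewrite (negbTE three_neq0).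
Qed.

Lemma classical_cartan_involution l : (3 < l)%N -> classical_cartan l <[g]>%VS.
Proof.
move=> l_gt3; split.
- split; first split.
  + by move=> x /vlineP[k ->]; apply: in_slZ.
  + by move=> x y xg yg; rewrite (lie_abelian_vline xg yg) mem0v.
  split; last exact: self_normalizing_involution.
  by exists 1%N => x [|y [|//]] //= _ xg /andP[yg _]; apply: (lie_abelian_vline xg yg).
- exact: lie_abelian_vline.
- exact: weight_decomposition_involution.
- exact: dim_root_bracket_involution.
- move=> a b root_a root_b nz_b string; apply: (no_root_string_involution root_a root_b nz_b).
  by move=> k k_range; apply: string; lia.
Qed.

End Involution.

Lemma lie_abelian_proper (H : {vspace M}) : lie_abelian H -> exists2 x, in_sl x & x \notin H.
Proof.
move=> abH.
have [x01H|] := boolP (delta_mx 0 1 \in H); last by exists (delta_mx 0 1); rewrite ?in_sl_delta.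
have [x10H|] := boolP (delta_mx 1 0 \in H); last by exists (delta_mx 1 0); rewrite ?in_sl_delta.
have /matrixP/(_ 0 0) := abH _ _ x01H x10H.
by rewrite !mxE !big_ord2 !mxE /= !(mul0r, mulr1, add0r, subr0) => /eqP; rewrite oner_eq0.
Qed.

Lemma classical_cartan_root_vector l (H : {vspace M}) : classical_cartan l H ->
  exists a y h, [/\ y \in wspace H a, y \notin H, h \in H & a h != 0].
Proof.
case=> [[_ [_ selfnH]] abH decH _ _].
have [x xsl xH] := lie_abelian_proper abH; have [s [s_weights x_sum]] := decH x xsl.
have [q qs qH] : exists2 q, q \in s & q.2 \notin H.
  apply/hasP; apply: contraNT xH => /hasPn sH; rewrite x_sum big_seq.
  by apply: memv_suml => q /sH; rewrite negbK.
have [_ /wspaceP[qsl qa]] := s_weights q qs.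
have [h /andP[hH ah]] : exists h, (h \in H) && (q.1 h != 0).
  apply/existsP; apply: contraNT qH => /existsPn ah0; apply: selfnH => // h hH.
  by have := ah0 h; rewrite hH /= negbK => /eqP ah; rewrite qa // ah scale0r mem0v.
exists q.1, q.2, h; split=> //; exact/wspaceP.
Qed.

Lemma classical_cartan_vline l (H : {vspace M}) : classical_cartan l H ->
  exists g, [/\ in_sl g, g *m g = 1%:M & H = <[g]>%VS].
Proof.
move=> ccH; have [[[slH _] _] abH _ _ _] := ccH.
have [a [y [h [/wspaceP[ysl ya] yH hH ah]]]] := classical_cartan_root_vector ccH.
have y_neq0 : y != 0 by apply: contraNneq yH => ->; exact: mem0v.
have e_neq0 : a h / 2%:R != 0 by rewrite mulf_neq0 ?invr_eq0.
have hh := sqr_ad_eigen (slH h hH) (ya h hH) y_neq0 ah.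
(* Rescaled by its half-weight, h becomes an involution; the abelian H lies in its
   centralizer, which is the line through it. *)
pose g := (a h / 2%:R)^-1 *: h.
have g_sl : in_sl g by apply/in_slZ/slH.
have g_sqr : g *m g = 1%:M.
  by rewrite -scalemxAl -scalemxAr hh !scalerA -expr2 -exprMn mulVf // expr1n scale1r.
exists g; split=> //; apply/vspaceP => v; apply/idP/idP => [vH|/vlineP[k ->]]; last first.
  exact/memvZ/memvZ.
have vg : v *m g = g *m v.
  by rewrite -scalemxAr -scalemxAl; move/eqP: (abH v h vH hH); rewrite subr_eq0 => /eqP ->.
by rewrite (centralizer_involution g_sl g_sqr (slH v vH) vg); apply/memvZ/memv_line.
Qed.

Definition trcoord (g x : M) : F := \tr (x *m g) / 2%:R.

Lemma trcoord_lin (g : M) k x y : trcoord g (k *: x + y) = k * trcoord g x + trcoord g y.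
Proof. by rewrite /trcoord mulmxDl -scalemxAl mxtraceD mxtraceZ mulrDl mulrA. Qed.

Lemma trcoord_vline (g v : M) : g *m g = 1%:M -> v \in <[g]>%VS -> v = trcoord g v *: g.
Proof.
move=> g_sqr /vlineP[k ->]; rewrite /trcoord -scalemxAl mxtraceZ g_sqr mxtrace1.
by rewrite mulfK.
Qed.

Definition comb3 (g0 g1 g2 : M) (a0 a1 a2 : F) : M := a0 *: g0 + a1 *: g1 + a2 *: g2.

Definition orthonormal3 (g0 g1 g2 : M) : Prop :=
  [/\ [/\ in_sl g0, in_sl g1 & in_sl g2],
      [/\ g0 *m g0 = 1%:M, g1 *m g1 = 1%:M & g2 *m g2 = 1%:M] &
      [/\ \tr (g0 *m g1) = 0, \tr (g1 *m g2) = 0 & \tr (g2 *m g0) = 0]].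

Definition lines3 (g0 g1 g2 : M) (i : 'I_3) : {vspace M} := <[tnth [tuple g0; g1; g2] i]>%VS.

Section Orthonormal.
Variables g0 g1 g2 : M.
Hypothesis ON : orthonormal3 g0 g1 g2.

Lemma comb3_sl a0 a1 a2 : in_sl (comb3 g0 g1 g2 a0 a1 a2).
Proof. by have [[s0 s1 s2] _ _] := ON; rewrite /comb3 !in_slD ?in_slZ. Qed.

Lemma trcoord_comb3 a0 a1 a2 :
  [/\ trcoord g0 (comb3 g0 g1 g2 a0 a1 a2) = a0, trcoord g1 (comb3 g0 g1 g2 a0 a1 a2) = a1
    & trcoord g2 (comb3 g0 g1 g2 a0 a1 a2) = a2].
Proof.
have [_ [q0 q1 q2] [t01 t12 t20]] := ON.
have [t10 t21 t02] : [/\ \tr (g1 *m g0) = 0, \tr (g2 *m g1) = 0 & \tr (g0 *m g2) = 0].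
  by split; rewrite mxtrace_mulC.
rewrite /trcoord /comb3 !mulmxDl -!scalemxAl !mxtraceD !mxtraceZ q0 q1 q2.
rewrite t01 t12 t20 t10 t21 t02 mxtrace1 !mulr0 !addr0 !add0r.
by split; rewrite mulfK.
Qed.

Lemma comb3_eq0 a0 a1 a2 : comb3 g0 g1 g2 a0 a1 a2 = 0 -> [/\ a0 = 0, a1 = 0 & a2 = 0].
Proof.
move=> comb0; have [] := trcoord_comb3 a0 a1 a2.
by rewrite comb0 /trcoord !mul0mx !mxtrace0 !mul0r => <- <- <-.
Qed.

Lemma directv_lines3 : directv (\sum_i lines3 g0 g1 g2 i)%VS.
Proof.
have [_ [q0 q1 q2] _] := ON.
apply/directv_sum_independent => us us_line us_sum i _.
pose a j := trcoord (tnth [tuple g0; g1; g2] j) (us j).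
have us_a j : us j = a j *: tnth [tuple g0; g1; g2] j.
  by apply: trcoord_vline (us_line j isT); case: (ord3P j) => ->.
have [a0 a1 a2] : [/\ a 0 = 0, a 1 = 0 & a 2 = 0].
  by apply: comb3_eq0; rewrite -us_sum big_ord3 (us_a 0) (us_a 1) (us_a 2) /= addrA.
by rewrite us_a; case: (ord3P i) => ->; rewrite ?a0 ?a1 ?a2 scale0r.
Qed.

Lemma killing_lines3 i j x y : i != j ->
  x \in lines3 g0 g1 g2 i -> y \in lines3 g0 g1 g2 j -> killing x y = 0.
Proof.
have [_ _ [t01 t12 t20]] := ON.
move=> ij /vlineP[k ->] /vlineP[k' ->]; rewrite /killing -scalemxAl -scalemxAr !mxtraceZ.
suff -> : \tr (tnth [tuple g0; g1; g2] i *m tnth [tuple g0; g1; g2] j) = 0 by rewrite !mulr0.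
by case: (ord3P i) ij => ->; case: (ord3P j) => -> //= _; rewrite mxtrace_mulC.
Qed.

Lemma classical_cartan_lines3 l i : 3%:R != 0 :> F -> (3 < l)%N ->
  classical_cartan l (lines3 g0 g1 g2 i).
Proof.
have [[s0 s1 s2] [q0 q1 q2] _] := ON.
by move=> three_neq0; apply: classical_cartan_involution => //; case: (ord3P i) => ->.
Qed.

End Orthonormal.

Definition pauli_triple (c : F) (g0 g1 g2 : M) : Prop :=
  [/\ orthonormal3 g0 g1 g2, c ^+ 2 = -1 & g0 *m g1 = c *: g2].

Section Pauli.
Variables (c : F) (g0 g1 g2 : M).
Hypothesis P : pauli_triple c g0 g1 g2.

Lemma pauli_triple_mul :
  [/\ g1 *m g0 = - (c *: g2), g1 *m g2 = c *: g0, g2 *m g1 = - (c *: g0),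
      g2 *m g0 = c *: g1 & g0 *m g2 = - (c *: g1)].
Proof.
have [[[s0 s1 s2] [q0 q1 q2] [t01 t12 t20]] c_sqr m01] := P.
have m02 : g0 *m g2 = - (c *: g1).
  have : g0 *m (g0 *m g1) = g0 *m (c *: g2) by rewrite m01.
  rewrite mulmxA q0 mul1mx -scalemxAr => ->.
  by rewrite scalerA -expr2 c_sqr scaleN1r opprK.
have m21 : g2 *m g1 = - (c *: g0).
  have : (g0 *m g1) *m g1 = (c *: g2) *m g1 by rewrite m01.
  rewrite -mulmxA q1 mulmx1 -scalemxAl => ->.
  by rewrite scalerA -expr2 c_sqr scaleN1r opprK.
have t21 : \tr (g2 *m g1) = 0 by rewrite mxtrace_mulC.
have t02 : \tr (g0 *m g2) = 0 by rewrite mxtrace_mulC.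
rewrite (sl2_anticomm_orth s0 s1 t01) (sl2_anticomm_orth s2 s1 t21).
by rewrite (sl2_anticomm_orth s0 s2 t02) m01 m21 m02 !opprK.
Qed.

Lemma lie_comb3 a0 a1 a2 b0 b1 b2 :
  lie (comb3 g0 g1 g2 a0 a1 a2) (comb3 g0 g1 g2 b0 b1 b2) =
  comb3 g0 g1 g2 (2%:R * c * (a1 * b2 - a2 * b1)) (2%:R * c * (a2 * b0 - a0 * b2))
    (2%:R * c * (a0 * b1 - a1 * b0)).
Proof.
have [[_ [q0 q1 q2] _] _ m01] := P; have [m10 m12 m21 m20 m02] := pauli_triple_mul.
rewrite /lie /comb3 !mulmxDl !mulmxDr -!scalemxAl -!scalemxAr.
rewrite q0 q1 q2 m01 m10 m12 m21 m20 m02.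
by apply/matrixP => i j; rewrite !mxE; ring.
Qed.

Lemma comb3_trcoord x : in_sl x ->
  x = comb3 g0 g1 g2 (trcoord g0 x) (trcoord g1 x) (trcoord g2 x).
Proof.
have [ON c_sqr m01] := P; have [[s0 s1 s2] [_ _ q2] _] := ON.
move=> xsl; apply/eqP; rewrite -subr_eq0; set y := comb3 _ _ _ _ _ _; set z := x - y.
have zsl : in_sl z by rewrite in_slD ?in_slN ?comb3_sl.
have [y0 y1 y2] := trcoord_comb3 ON (trcoord g0 x) (trcoord g1 x) (trcoord g2 x).
have z_anti g : in_sl g -> trcoord g y = trcoord g x -> z *m g = - (g *m z).
  move=> gsl /(mulIf (invr_neq0 two_neq0)) yx; apply: sl2_anticomm_orth => //.
  by rewrite mxtrace_mulC /z mulmxBl raddfB /= yx subrr.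
have z0 := z_anti g0 s0 y0; have z1 := z_anti g1 s1 y1; have z2 := z_anti g2 s2 y2.
have comm : z *m (g0 *m g1) = g0 *m g1 *m z.
  by rewrite mulmxA z0 mulNmx -[g0 *m z *m g1]mulmxA z1 mulmxN opprK mulmxA.
suff zg2 : z *m g2 = 0 by rewrite -[z]mulmx1 -q2 mulmxA zg2 mul0mx.
have g2z : g2 *m z = - (z *m g2) by rewrite z2 opprK.
move/eqP: comm; rewrite m01 -scalemxAr -scalemxAl g2z scalerN -addr_eq0 -scalerDr.
rewrite scaler_eq0 (negbTE (sqrN1_neq0 c_sqr)) /= -mulr2n -scaler_nat scaler_eq0.
by rewrite (negbTE two_neq0) => /eqP.
Qed.

Lemma pauli_COD l : 3%:R != 0 :> F -> (3 < l)%N -> COD l (lines3 g0 g1 g2).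
Proof.
move=> three_neq0 l_gt3; have [ON _ _] := P; split.
- move=> x; rewrite big_ord3 /=; split=> [xsl|].
    rewrite (comb3_trcoord xsl) /comb3 -addrA.
    by apply: memv_add; [|apply: memv_add]; apply/memvZ/memv_line.
  case/memv_addP => _ /vlineP[k0 ->] [_ /memv_addP[_ /vlineP[k1 ->] [_ /vlineP[k2 ->] ->]]].
  by move=> ->; rewrite addrA; apply: (comb3_sl ON).
- exact: directv_lines3.
- by move=> i; apply: classical_cartan_lines3.
- exact: killing_lines3.
Qed.

End Pauli.

Lemma orth_involution_mul_sqr (x y : M) : in_sl x -> in_sl y -> \tr (x *m y) = 0 ->
  x *m x = 1%:M -> y *m y = 1%:M -> (x *m y) *m (x *m y) = - 1%:M.
Proof.
move=> xsl ysl xy0 xx yy.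
rewrite -mulmxA [y *m _]mulmxA (sl2_anticomm_orth xsl ysl xy0) mulNmx mulmxN.
by rewrite -mulmxA yy mulmx1 xx.
Qed.

Lemma pauli_triple_of (c : F) (g0 g1 : M) : c ^+ 2 = -1 -> in_sl g0 -> in_sl g1 ->
  g0 *m g0 = 1%:M -> g1 *m g1 = 1%:M -> \tr (g0 *m g1) = 0 ->
  pauli_triple c g0 g1 (c^-1 *: (g0 *m g1)).
Proof.
move=> c_sqr s0 s1 q0 q1 t01; have c_neq0 := sqrN1_neq0 c_sqr.
split=> //; last by rewrite scalerA mulfV // scale1r.
split; split=> //.
- exact/in_slZ/eqP.
- rewrite -scalemxAl -scalemxAr orth_involution_mul_sqr // scalerA -expr2 exprVn c_sqr.
  by rewrite invrN invr1 scaleN1r opprK.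
- by rewrite -scalemxAr mxtraceZ mxtrace_mulC -mulmxA q1 mulmx1 (eqP s0) mulr0.
- by rewrite -scalemxAl mxtraceZ mxtrace_mulC mulmxA q0 mul1mx (eqP s1) mulr0.
Qed.

Lemma exists_pauli_triple (c : F) : c ^+ 2 = -1 -> exists g0 g1 g2, pauli_triple c g0 g1 g2.
Proof.
move=> c_sqr; pose z : M := delta_mx 0 0 - delta_mx 1 1.
pose x : M := delta_mx 0 1 + delta_mx 1 0.
exists z, x, (c^-1 *: (z *m x)); apply: pauli_triple_of => //.
- by rewrite /in_sl mxtrace2 !mxE /=; apply/eqP; ring.
- by rewrite /in_sl mxtrace2 !mxE /=; apply/eqP; ring.
- apply/matrixP => i j; rewrite !mxE !big_ord2 !mxE.
  by have [->|->] := ord2P i; have [->|->] := ord2P j; rewrite /=; ring.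
- apply/matrixP => i j; rewrite !mxE !big_ord2 !mxE.
  by have [->|->] := ord2P i; have [->|->] := ord2P j; rewrite /=; ring.
- by rewrite mxtrace2 !mxE !big_ord2 !mxE /=; ring.
Qed.

Lemma pauli_triple_oppr (c : F) (g0 g1 g2 : M) :
  pauli_triple c g0 g1 g2 -> pauli_triple (- c) g0 g1 (- g2).
Proof.
case=> -[[s0 s1 s2] [q0 q1 q2] [t01 t12 t20]] c_sqr m01; split.
- by split; split; rewrite ?in_slN ?mulmxN ?mulNmx ?opprK ?raddfN /= ?t12 ?t20 ?oppr0.
- by rewrite sqrrN.
- by rewrite scaleNr scalerN opprK.
Qed.

Lemma COD_pauli l (H : 'I_3 -> {vspace M}) : COD l H ->
  exists c g0 g1 g2, pauli_triple c g0 g1 g2 /\ H =1 lines3 g0 g1 g2.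
Proof.
case=> span_H _ cartan_H orth_H.
have [g Hg] := fin_all_exists (fun i => classical_cartan_vline (cartan_H i)).
have H_g i : H i = <[g i]>%VS by case: (Hg i).
have [s0 q0 _] := Hg 0; have [s1 q1 _] := Hg 1; have [s2 q2 _] := Hg 2.
have orth i j : i != j -> \tr (g i *m g j) = 0.
  have mem_g k : g k \in H k by rewrite H_g memv_line.
  move=> ij; have /eqP := orth_H i j (g i) (g j) ij (mem_g i) (mem_g j).
  by rewrite /killing mulf_eq0 (negbTE four_neq0) => /eqP.
have ON : orthonormal3 (g 0) (g 1) (g 2) by split; split; rewrite ?orth.
(* g0 g1 is traceless and trace-orthogonal to g0 and g1, hence a multiple of g2. *)
have : g 0 *m g 1 \in (\sum_i H i)%VS by apply/span_H/eqP/orth.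
rewrite big_ord3 !H_g /=.
case/memv_addP => _ /vlineP[k0 ->] [_ /memv_addP[_ /vlineP[k1 ->] [_ /vlineP[c ->] ->]]].
rewrite addrA -/(comb3 _ _ _ k0 k1 c) => m01.
have [k0_0 k1_0 _] := trcoord_comb3 ON k0 k1 c; rewrite -m01 in k0_0 k1_0.
rewrite /trcoord mxtrace_mulC mulmxA q0 mul1mx (eqP s1) mul0r in k0_0.
rewrite /trcoord -mulmxA q1 mulmx1 (eqP s0) mul0r in k1_0.
rewrite /comb3 -k0_0 -k1_0 !scale0r !add0r in m01.
have c_sqr : c ^+ 2 = -1.
  have := orth_involution_mul_sqr s0 s1 (orth 0 1 isT) q0 q1.
  rewrite m01 -scalemxAl -scalemxAr q2 scalerA => /matrixP/(_ 0 0).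
  by rewrite !mxE /= mulr1 expr2.
exists c, (g 0), (g 1), (g 2); split=> // i.
by rewrite H_g /lines3; case: (ord3P i) => ->.
Qed.

Definition pauli_map (g0 g1 g2 h0 h1 h2 x : M) : M :=
  comb3 h0 h1 h2 (trcoord g0 x) (trcoord g1 x) (trcoord g2 x).

Lemma pauli_map_lin (g0 g1 g2 h0 h1 h2 : M) k x y :
  pauli_map g0 g1 g2 h0 h1 h2 (k *: x + y) =
  k *: pauli_map g0 g1 g2 h0 h1 h2 x + pauli_map g0 g1 g2 h0 h1 h2 y.
Proof. by rewrite /pauli_map !trcoord_lin /comb3; apply/matrixP => i j; rewrite !mxE; ring. Qed.

Lemma pauli_map_comb3 (g0 g1 g2 h0 h1 h2 : M) a0 a1 a2 : orthonormal3 g0 g1 g2 ->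
  pauli_map g0 g1 g2 h0 h1 h2 (comb3 g0 g1 g2 a0 a1 a2) = comb3 h0 h1 h2 a0 a1 a2.
Proof. by move=> ON; rewrite /pauli_map; have [-> -> ->] := trcoord_comb3 ON a0 a1 a2. Qed.

Lemma pauli_map_tnth (g0 g1 g2 h0 h1 h2 : M) i k : orthonormal3 g0 g1 g2 ->
  pauli_map g0 g1 g2 h0 h1 h2 (k *: tnth [tuple g0; g1; g2] i) = k *: tnth [tuple h0; h1; h2] i.
Proof.
move=> ON; have unit (v0 v1 v2 : M) : k *: tnth [tuple v0; v1; v2] i =
    comb3 v0 v1 v2 (k * (i == 0)%:R) (k * (i == 1)%:R) (k * (i == 2)%:R).
  by rewrite /comb3; case: (ord3P i) => -> /=; rewrite !mulr1 !mulr0 !scale0r ?addr0 ?add0r.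
by rewrite !unit pauli_map_comb3.
Qed.

Lemma pauli_mapK c (g0 g1 g2 h0 h1 h2 x : M) :
  pauli_triple c g0 g1 g2 -> orthonormal3 h0 h1 h2 -> in_sl x ->
  pauli_map h0 h1 h2 g0 g1 g2 (pauli_map g0 g1 g2 h0 h1 h2 x) = x.
Proof. by move=> Pg ONh xsl; rewrite pauli_map_comb3 // -(comb3_trcoord Pg xsl). Qed.

Lemma lie_aut_pauli_map c (g0 g1 g2 h0 h1 h2 : M) :
  pauli_triple c g0 g1 g2 -> pauli_triple c h0 h1 h2 -> lie_aut (pauli_map g0 g1 g2 h0 h1 h2).
Proof.
move=> Pg Ph; have [ONg _ _] := Pg; have [ONh _ _] := Ph; split.
- by move=> x _; apply: comb3_sl.
- by move=> k x y _ _; apply: pauli_map_lin.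
- move=> x y xsl ysl; rewrite {1}(comb3_trcoord Pg xsl) {1}(comb3_trcoord Pg ysl).
  by rewrite (lie_comb3 Pg) pauli_map_comb3 // (lie_comb3 Ph).
- move=> x y xsl ysl fxy.
  by rewrite -(pauli_mapK Pg ONh xsl) fxy (pauli_mapK Pg ONh ysl).
- move=> y ysl; exists (pauli_map h0 h1 h2 g0 g1 g2 y); first exact: comb3_sl.
  exact: pauli_mapK Ph ONg ysl.
Qed.

Lemma pauli_COD_conjugate c c' (g0 g1 g2 h0 h1 h2 : M) (H H' : 'I_3 -> {vspace M}) :
  pauli_triple c g0 g1 g2 -> pauli_triple c' h0 h1 h2 ->
  H =1 lines3 g0 g1 g2 -> H' =1 lines3 h0 h1 h2 -> COD_conjugate H H'.
Proof.
move=> Pg Ph Hg Hh.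
wlog c'c : c' h2 Ph Hh / c' = c.
  move=> conj; have [_ c'_sqr _] := Ph; have [_ c_sqr _] := Pg.
  have : (c' - c) * (c' + c) == 0 by rewrite -subr_sqr c_sqr c'_sqr subrr.
  rewrite mulf_eq0 subr_eq0 addr_eq0 => /orP[] /eqP c'E; first exact: (conj c' h2).
  apply: (conj (- c') (- h2)); [exact: pauli_triple_oppr | | by rewrite c'E opprK].
  by move=> i; rewrite Hh /lines3; case: (ord3P i) => -> //=; rewrite vline_opp.
rewrite {}c'c in Ph; have [ONg _ _] := Pg.
exists (pauli_map g0 g1 g2 h0 h1 h2); split; first exact: lie_aut_pauli_map Ph.
exists id => i y; rewrite Hg Hh /=; split.
- case/vlineP => k ->; exists (k *: tnth [tuple g0; g1; g2] i); first exact/memvZ/memv_line.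
  exact: pauli_map_tnth.
- by case=> _ /vlineP[k ->] <-; rewrite pauli_map_tnth //; apply/memvZ/memv_line.
Qed.

End SL2.

Section FiniteField.
Variable F : finFieldType.

Lemma unity_root_card (x : F) : x != 0 -> #|F|.-1.-unity_root x.
Proof.
move=> x_neq0; have q_gt0 : (0 < #|F|)%N by apply/card_gt0P; exists 0.
by rewrite unity_rootE; apply/eqP/(mulIf x_neq0); rewrite mul1r -exprSr prednK ?expf_card.
Qed.

Lemma finField_prim_root : exists w : F, #|F|.-1.-primitive_root w.
Proof.
have q1_gt0 : (0 < #|F|.-1)%N.
  by rewrite -(cardC1 (0 : F)); apply/card_gt0P; exists 1; rewrite !inE oner_eq0.
have roots : all #|F|.-1.-unity_root (enum (predC1 (0 : F))).
  by apply/allP => x; rewrite mem_enum => /unity_root_card.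
have size_roots : (#|F|.-1 <= size (enum (predC1 (0 : F)%R)))%N by rewrite -cardE cardC1.
by have /hasP[w _ w_prim] := has_prim_root q1_gt0 roots (enum_uniq _) size_roots; exists w.
Qed.

Lemma sqrN1_prim_root4 (c : F) : (1 : F) != -1 -> c ^+ 2 = -1 -> 4.-primitive_root c.
Proof.
move=> oneN1 c_sqr; apply/andP; split=> //; apply/forallP => -[[|[|[|[|//]]]] i_lt] /=.
- by rewrite unity_rootE expr1 eqbF_neg; apply: contra_neq oneN1 => c1; rewrite -c_sqr c1 expr1n.
- by rewrite unity_rootE c_sqr eqbF_neg eq_sym.
- rewrite unity_rootE exprS c_sqr mulrN1 eqbF_neg; apply: contra_neq oneN1 => cN1.
  by rewrite -c_sqr -[c]opprK cN1 sqrrN expr1n.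
- by rewrite unity_rootE (exprM c 2 2) c_sqr sqrrN expr1n eqb_id.
Qed.

Lemma sqrN1_card_mod4 : (1 : F) != -1 ->
  (exists c : F, c ^+ 2 = -1) <-> (#|F| = 1 %[mod 4])%N.
Proof.
move=> oneN1; have q_gt0 : (0 < #|F|)%N by apply/card_gt0P; exists 0.
split=> [[c c_sqr]|q_mod4].
  have : (4 %| #|F|.-1)%N.
    rewrite (prim_order_dvd (sqrN1_prim_root4 oneN1 c_sqr)) -unity_rootE.
    by rewrite unity_root_card ?sqrN1_neq0.
  by case/dvdnP=> m qm; rewrite -(prednK q_gt0) qm -addn1 modnMDl.
have [w w_prim] := finField_prim_root.
have q4 : (4 %| #|F|.-1)%N by rewrite /dvdn; lia.
have c_prim := dvdn_prim_root w_prim q4; set c := w ^+ _ in c_prim.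
have c2_prim : 2.-primitive_root (c ^+ 2) := dvdn_prim_root c_prim (isT : (2 %| 4)%N).
exists c; have /eqP := prim_expr_order c2_prim; rewrite sqrf_eq1 => /orP[/eqP c2|/eqP //].
by have := prim_order_dvd c2_prim 1; rewrite expr1 c2 eqxx.
Qed.

End FiniteField.

Theorem corollary3p3 (F : finFieldType) (p : nat) (hp : p \in [pchar F])
    (hp3 : (3 < p)%N) :
  ((exists H : 'I_3 -> {vspace 'M[F]_2}, COD p H) /\
   (forall H H' : 'I_3 -> {vspace 'M[F]_2}, COD p H -> COD p H' ->
      COD_conjugate H H'))
  <-> (#|F| = 1 %[mod 4])%N.
Proof.
have two_neq0 : 2%:R != 0 :> F by apply: natr_neq0_lt_pchar hp _; lia.
have three_neq0 : 3%:R != 0 :> F by apply: natr_neq0_lt_pchar hp _; lia.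
have oneN1 : (1 : F) != -1 by rewrite -addr_eq0 -mulr2n.
rewrite -(sqrN1_card_mod4 oneN1); split=> [[[H COD_H] _]|[c c_sqr]].
  have [c [g0 [g1 [g2 [[_ c_sqr _] _]]]]] := COD_pauli two_neq0 COD_H.
  by exists c.
split.
  have [g0 [g1 [g2 Pg]]] := exists_pauli_triple c_sqr.
  exists (lines3 g0 g1 g2); exact: (pauli_COD two_neq0 Pg three_neq0 hp3).
move=> H H' /(COD_pauli two_neq0)[c1 [g0 [g1 [g2 [Pg Hg]]]]].
move=> /(COD_pauli two_neq0)[c2 [h0 [h1 [h2 [Ph Hh]]]]].
exact: (pauli_COD_conjugate two_neq0 Pg Ph Hg Hh).
Qed.
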